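(* Let $\delta\ge 2$ and $s\in\{1,\dots,n\}$ with $d_s-\delta+1\ge 1$, and let $\tilde d=\sum_{i\ne s}(d_i-1)+d_s-\delta$. If $d\ge\tilde d$ then $\mathcal D^{(\delta,s)}_{\mathcal X}(d)=\mathcal D^{(\delta,s)}_{\mathcal X}(\tilde d)$, and $$\dim_{\mathbb F_q}\mathcal D^{(\delta,s)}_{\mathcal X}(\tilde d)=(d_s-\delta+1)\prod_{i\ne s}d_i .$$ Moreover, if $\tilde d\ge 1$, then $\dim_{\mathbb F_q}\mathcal D^{(\delta,s)}_{\mathcal X}(\tilde d-1)=\dim_{\mathbb F_q}\mathcal D^{(\delta,s)}_{\mathcal X}(\tilde d)-1$.
   Context: Let $\mathbb F_q$ be a finite field, $K_1,\dots,K_n\subseteq\mathbb F_q$ nonempty, $d_i=|K_i|$, and $\mathcal X=K_1\times\cdots\times K_n=\{\boldsymbol\alpha_1,\dots,\boldsymbol\alpha_m\}$ (a fixed enumeration), $m=\prod_{i=1}^n d_i$. Let $\Psi:\mathbb F_q[X_1,\dots,X_n]\to\mathbb F_q^m$, $f\mapsto(f(\boldsymbol\alpha_1),\dots,f(\boldsymbol\alpha_m))$. For $d\ge 0$, $\mathbb F_q[X_1,\dots,X_n]_{\le d}$ is the space of polynomials of degree at most $d$ together with $0$. For integers $\delta\ge 2$ and $s\in\{1,\dots,n\}$, $\mathcal P^{(\delta,s)}_d$ is the set of $f\in\mathbb F_q[X_1,\dots,X_n]_{\le d}$ with $\deg_{X_s}f<d_s-\delta+1$, together with $0$; the $(\delta,s)$-quasi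 affine cartesian code is $\mathcal D^{(\delta,s)}_{\mathcal X}(d)=\Psi(\mathcal P^{(\delta,s)}_d)\subseteq\mathbb F_q^m$. *)

From HB Require Import structures.
From mathcomp Require Import all_boot all_order all_algebra all_field.
From mathcomp Require Import mpoly.
From Stdlib Require Import ClassicalEpsilon.
Set Implicit Arguments. Unset Strict Implicit. Unset Printing Implicit Defensive.
Import GRing.Theory.
Local Open Scope ring_scope.

(* degree of the multivariate polynomial p in the variable X_s
   (0 for the zero polynomial) *)
Definition degX (F : finFieldType) (n : nat) (s : 'I_n) (p : {mpoly F[n]}) : nat :=
  (\max_(mo <- msupp p) mo s)%N.

Definition in_grid (F : finFieldType) (n : nat) (K : 'I_n -> {set F})
  (x : 'I_n -> F) : Prop := forall i, x i \in K i.

Definition Psi (F : finFieldType) (n m : nat) (alpha : 'I_m -> ('I_n -> F))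
  (f : {mpoly F[n]}) : 'rV[F]_m := \row_(j < m) f.@[alpha j].

(* P^{(delta,s)}_d : polynomials of total degree <= d (or 0) with
   deg_{X_s} f < d_s - delta + 1  (msize p = total degree + 1, msize 0 = 0) *)
Definition Pds (F : finFieldType) (n : nat) (K : 'I_n -> {set F})
  (delta : nat) (s : 'I_n) (d : nat) (f : {mpoly F[n]}) : Prop :=
  f = 0 \/ ((msize f <= d.+1)%N /\ (degX s f < #|K s| - delta + 1)%N).

Definition asb (P : Prop) : bool :=
  if excluded_middle_informative P then true else false.

Definition qac_code (F : finFieldType) (n m : nat) (K : 'I_n -> {set F})
  (alpha : 'I_m -> ('I_n -> F)) (delta : nat) (s : 'I_n) (d : nat)
  : {set 'rV[F]_m} :=
  [set v | asb (exists f, Pds K delta s d f /\ v = Psi alpha f)].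

(* its F_q-dimension: the dimension of the (linear) span of its words
   (the code is already a linear subspace, so this is its dimension) *)
Definition code_dim (F : finFieldType) (m : nat) (C : {set 'rV[F]_m}) : nat :=
  \dim (<< enum C >>)%VS.

From HB Require Import structures.
From mathcomp Require Import all_boot all_order all_algebra all_field.
From mathcomp Require Import mpoly zify.
From Stdlib Require Import FunctionalExtensionality ClassicalEpsilon.
Set Implicit Arguments. Unset Strict Implicit. Unset Printing Implicit Defensive.
Import GRing.Theory.
Local Open Scope ring_scope.

(* Write b_s = d_s - delta + 1 and b_i = d_i for i <> s.  On the grid
   X = K_1 x ... x K_n, the power t^e of a coordinate agrees on K_i with a
   polynomial of degree < min(d_i, e + 1) (Lagrange interpolation), so the
   word of every polynomial of P^(delta,s)_d is a combination of words of
   "reduced" monomials X^f with f_i < b_i and deg f <= d; conversely these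
   monomials lie in P^(delta,s)_d.  The words of all monomials with
   f_i < d_i span F^m (they interpolate the indicator of each grid point)
   and there are m of them, so they form a basis.  Hence
   dim D(d) = #{f : f_i < b_i, sum f_i <= d}, a purely combinatorial count in
   a box.  The box has a unique vector of maximal degree, its corner of
   degree sum (b_i - 1) = dt; this gives both the stabilization for d >= dt,
   the dimension prod b_i at dt, and the drop by one at dt - 1. *)

Section Interpolation.
Variables (F : finFieldType) (K : {set F}).

Lemma lagrange_interp (g : F -> F) :
  exists2 p : {poly F}, (size p <= #|K|)%N & {in K, forall t, g t = p.[t]}.
Proof.
pose L a : {poly F} := \prod_(b <- enum (K :\ a)) ('X - b%:P).
exists (\sum_(a in K) (g a / (L a).[a]) *: L a).
  apply: leq_trans (size_sum _ _ _) _; apply/bigmax_leqP => a aK.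
  apply: leq_trans (size_scale_leq _ _) _.
  by rewrite size_prod_XsubC -cardE (cardsD1 a K) aK.
move=> t tK; rewrite horner_sum (bigD1 t) //= big1 ?addr0.
  rewrite hornerZ divfK // horner_prod prodf_seq_neq0; apply/allP => b.
  by rewrite mem_enum !inE => /andP[bt _] /=; rewrite hornerXsubC subr_eq0 eq_sym.
move=> a /andP[aK ta]; rewrite hornerZ [(L a).[t]]horner_prod.
rewrite (bigD1_seq t) ?enum_uniq //= ?hornerXsubC ?subrr ?mul0r ?mulr0 //.
by rewrite mem_enum !inE tK eq_sym ta.
Qed.

Lemma interp_pow (m : nat) : exists2 p : {poly F},
  (size p <= minn #|K| m.+1)%N & {in K, forall t, t ^+ m = p.[t]}.
Proof.
have [ltmK | leKm] := ltnP m #|K|.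
  exists 'X^m; last by move=> t _; rewrite hornerXn.
  by rewrite size_polyXn leq_min ltmK leqnn.
have [p szp pE] := lagrange_interp (fun t => t ^+ m).
by exists p; rewrite // leq_min szp (leq_trans szp (leqW leKm)).
Qed.

End Interpolation.

(* Exponent vectors of reduced monomials: their entries stay below the size of
   the coordinate sets, hence below #|F|. *)
Definition expvec (F : finFieldType) (n : nat) := {ffun 'I_n -> 'I_#|F|}.

Definition monomial_of (F : finFieldType) (n : nat) (f : expvec F n)
  : 'X_{1..n} := [multinom (f i : nat) | i < n].

Definition mono_word (F : finFieldType) (n m : nat)
  (alpha : 'I_m -> 'I_n -> F) (f : expvec F n) : 'rV[F]_m :=
  \row_j \prod_i alpha j i ^+ f i.

Definition mono_span (F : finFieldType) (n m : nat)
  (alpha : 'I_m -> 'I_n -> F) (B : {set expvec F n}) : {vspace 'rV[F]_m} :=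
  <<map (mono_word alpha) (enum B)>>%VS.

Section MonomialWords.
Variables (F : finFieldType) (n m : nat) (alpha : 'I_m -> 'I_n -> F).

Lemma Psi_is_linear : linear (Psi alpha).
Proof. by move=> a p q; apply/rowP => j; rewrite !mxE mevalD mevalZ. Qed.

HB.instance Definition _ :=
  GRing.isLinear.Build F {mpoly F[n]} 'rV[F]_m _ (Psi alpha) Psi_is_linear.

Lemma Psi_monomial (f : expvec F n) :
  Psi alpha 'X_[monomial_of f] = mono_word alpha f.
Proof.
by apply/rowP => j; rewrite !mxE mevalX; apply: eq_bigr => i _; rewrite mnmE.
Qed.

Lemma mono_word_in_span (B : {set expvec F n}) f :
  f \in B -> mono_word alpha f \in mono_span alpha B.
Proof. by move=> fB; apply/memv_span/map_f; rewrite mem_enum. Qed.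

Lemma mono_span_sub (B1 B2 : {set expvec F n}) :
  B1 \subset B2 -> (mono_span alpha B1 <= mono_span alpha B2)%VS.
Proof.
move=> sB12; apply/span_subvP => _ /mapP[f fB1 ->].
by apply/mono_word_in_span/(subsetP sB12); rewrite -mem_enum.
Qed.

Variable K : 'I_n -> {set F}.
Hypothesis alpha_on_grid : forall j i, alpha j i \in K i.

(* If each g i agrees on K i with a polynomial p i, the word of the products
   prod_i g i (alpha j i) expands, distributing the product over the sums
   p i = sum_k (p i)_k X^k, into a combination of monomial words; it lies in
   the span of any B containing every f with all (p i)_(f i) nonzero. *)
Lemma prod_word_in_span (p : 'I_n -> {poly F}) (g : 'I_n -> F -> F)
    (B : {set expvec F n}) :
  (forall i, size (p i) <= #|K i|)%N ->
  (forall i, {in K i, forall t, g i t = (p i).[t]}) ->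
  (forall f : expvec F n, (forall i, (p i)`_(f i) != 0) -> f \in B) ->
  \row_j \prod_i g i (alpha j i) \in mono_span alpha B.
Proof.
move=> szp gE supB.
have -> : \row_j \prod_i g i (alpha j i) =
    \sum_(f : expvec F n) (\prod_i (p i)`_(f i)) *: mono_word alpha f.
  apply/rowP => j; rewrite mxE summxE.
  under eq_bigr => i _ do
    rewrite gE // (@horner_coef_wide _ #|F|) ?(leq_trans (szp i)) ?max_card //.
  by rewrite bigA_distr_bigA; apply: eq_bigr => f _; rewrite !mxE -big_split.
rewrite (bigID (mem B)) /= [X in _ + X]big1 ?addr0 => [|f fB].
  by apply: memv_suml => f fB; apply/memvZ/mono_word_in_span.
have [i /eqP pi0] : exists i, (p i)`_(f i) == 0.
  apply/existsP; apply: contraNT fB => /existsPn nz.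
  by apply: supB => i; apply: nz.
by rewrite (bigD1 i) //= pi0 mul0r scale0r.
Qed.

End MonomialWords.

Section Boxes.
Variables (F : finFieldType) (n : nat) (c : 'I_n -> nat).

Definition box : {set expvec F n} :=
  [set f : expvec F n | [forall i, f i < c i]%N].
Definition box_le (d : nat) : {set expvec F n} :=
  [set f : expvec F n in box | (\sum_i f i <= d)%N].

Lemma box_le_sub d1 d2 : (d1 <= d2)%N -> box_le d1 \subset box_le d2.
Proof.
move=> le_d; apply/subsetP => f; rewrite !inE => /andP[-> le_f].
exact: leq_trans le_f le_d.
Qed.

Hypotheses (c_gt0 : forall i, (0 < c i)%N) (c_le : forall i, (c i <= #|F|)%N).

Lemma card_box : #|box| = (\prod_i c i)%N.
Proof.
have -> : box = [set f : expvec F n |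
    f \in family (fun i => [pred k : 'I_#|F| | k < c i]%N)].
  by apply/setP => f; rewrite !inE.
rewrite cardsE card_family foldrE big_map big_enum /=; apply: eq_big => // i _.
have widen_inj : injective (widen_ord (c_le i)) by move=> x y [] /ord_inj.
rewrite -[RHS]card_ord -(card_imset _ widen_inj).
apply: eq_card => k; apply/idP/imsetP => [klt | [k' _ ->]].
  by exists (Ordinal klt) => //; apply: val_inj.
by rewrite unfold_in /= ltn_ord.
Qed.

Lemma corner_lt i : ((c i).-1 < #|F|)%N.
Proof. by rewrite (leq_trans _ (c_le i)) ?ltn_predL. Qed.

Definition box_top : expvec F n := [ffun i => Ordinal (corner_lt i)].

Lemma box_top_in : box_top \in box.
Proof. by rewrite inE; apply/forallP => i; rewrite ffunE /= ltn_predL. Qed.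

Lemma box_degree_leqif f : f \in box ->
  (\sum_i f i <= \sum_i (c i).-1 ?= iff (f == box_top))%N.
Proof.
rewrite inE => /forallP f_lt.
have -> : (f == box_top) = [forall i, f i == (c i).-1 :> nat].
  apply/eqP/forallP => [-> i | eq_f]; first by rewrite ffunE.
  by apply/ffunP => i; apply/val_inj; rewrite ffunE; apply/eqP/eq_f.
by apply: leqif_sum => i _; apply/leqif_eq; rewrite -ltnS prednK.
Qed.

Lemma box_le_full d : (\sum_i (c i).-1 <= d)%N -> box_le d = box.
Proof.
move=> le_d; apply/setP => f; rewrite inE andb_idr // => fB.
exact: leq_trans (box_degree_leqif fB) le_d.
Qed.

(* Lowering the degree bound by one below the corner removes only the corner. *)
Lemma card_box_le_pred : (0 < \sum_i (c i).-1)%N ->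
  #|box_le (\sum_i (c i).-1).-1| = #|box_le (\sum_i (c i).-1)|.-1.
Proof.
move=> D_gt0; rewrite (box_le_full (leqnn _)) (cardsD1 box_top box) box_top_in.
rewrite add1n /=.
apply: eq_card => f; rewrite in_setD1 [f \in box_le _]inE andbC.
have [fB | _] := boolP (f \in box); rewrite ?andbF // !andbT.
have [le_fD eq_top] := box_degree_leqif fB.
by rewrite -ltnS prednK // ltn_neqAle le_fD andbT eq_top.
Qed.

End Boxes.

(* Exponent bounds b of the reduced monomials: deg_{X_s} < d_s - delta + 1 as
   imposed by P^(delta,s), and deg_{X_i} < d_i, the reduction on the grid. *)
Definition qac_bound (F : finFieldType) (n : nat) (K : 'I_n -> {set F})
  (delta : nat) (s i : 'I_n) : nat :=
  if i == s then (#|K s| - delta + 1)%N else #|K i|.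

Definition qac_exps (F : finFieldType) (n : nat) (K : 'I_n -> {set F})
  (delta : nat) (s : 'I_n) (d : nat) : {set expvec F n} :=
  box_le F (qac_bound K delta s) d.

Section QuasiAffineCodes.
Variables (F : finFieldType) (n m : nat) (K : 'I_n -> {set F}).
Variables (alpha : 'I_m -> 'I_n -> F) (delta : nat) (s : 'I_n).

Lemma PdsP d (f : {mpoly F[n]}) : Pds K delta s d f <->
  {in msupp f, forall e, (mdeg e <= d)%N /\ (e s < #|K s| - delta + 1)%N}.
Proof.
split=> [[-> | [size_f deg_f]] e | supp_f]; first by rewrite msupp0.
  move=> e_f; split; first exact: leq_trans (msize_mdeg_lt e_f) size_f.
  apply: leq_ltn_trans deg_f.
  exact: (@leq_bigmax_seq _ _ xpredT (fun e : 'X_{1..n} => e s) _ e_f isT).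
right; split; first by rewrite msizeE; apply/bigmax_leqP_seq => e /supp_f[].
rewrite /degX addn1 ltnS; apply/bigmax_leqP_seq => e /supp_f[_].
by rewrite addn1 ltnS.
Qed.

Lemma Pds_lin d a (f g : {mpoly F[n]}) :
  Pds K delta s d f -> Pds K delta s d g -> Pds K delta s d (a *: f + g).
Proof.
move=> /PdsP supp_f /PdsP supp_g; apply/PdsP => e /msuppD_le.
by rewrite mem_cat => /orP[/msuppZ_le/supp_f | /supp_g].
Qed.

Notation code d := (qac_code K alpha delta s d).

Lemma qac_codeP d v :
  reflect (exists f, Pds K delta s d f /\ v = Psi alpha f) (v \in code d).
Proof.
by rewrite inE /asb; case: excluded_middle_informative => h; constructor.
Qed.

Lemma qac_code0 d : 0 \in code d.
Proof. by apply/qac_codeP; exists 0; split; [left | rewrite linear0]. Qed.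

Lemma qac_code_lin d a u v :
  u \in code d -> v \in code d -> a *: u + v \in code d.
Proof.
move=> /qac_codeP[f [Pf ->]] /qac_codeP[g [Pg ->]]; apply/qac_codeP.
by exists (a *: f + g); rewrite linearP; split; first exact: Pds_lin.
Qed.

Lemma mem_span_qac_code d v : (v \in <<enum (code d)>>%VS) = (v \in code d).
Proof.
apply/idP/idP => [/coord_span -> | v_C]; last by apply/memv_span; rewrite mem_enum.
apply: (big_ind (fun w => w \in code d)) => [|u w u_C w_C | i _].
- exact: qac_code0.
- by rewrite -[u]scale1r qac_code_lin.
rewrite -[_ *: _]addr0 qac_code_lin ?qac_code0 //.
have [lt_i | le_i] := ltnP i (size (enum (code d))); first by rewrite -mem_enum mem_nth.
by rewrite nth_default ?qac_code0.
Qed.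

Hypothesis alpha_on_grid : forall j i, alpha j i \in K i.

(* Reduction on the grid: the word of a monomial X^e whose exponent in X_s is
   admissible is a combination of words of reduced monomials of degree at
   most deg e, obtained by interpolating each power t^(e i) on K i. *)
Lemma monomial_word_in_span (e : 'X_{1..n}) :
  (e s < qac_bound K delta s s)%N ->
  Psi alpha 'X_[e] \in mono_span alpha (qac_exps K delta s (mdeg e)).
Proof.
rewrite /qac_bound eqxx => es_lt.
have /fin_all_exists [p /all_and2[size_p p_pow]] : forall i, exists p : {poly F},
    (size p <= minn #|K i| (e i).+1)%N /\ {in K i, forall t, t ^+ e i = p.[t]}.
  by move=> i; have [p] := interp_pow (K i) (e i); exists p.
have -> : Psi alpha 'X_[e] = \row_j \prod_i alpha j i ^+ e i.
  by apply/rowP => j; rewrite !mxE mevalX.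
apply: (prod_word_in_span alpha_on_grid (p := p) (g := fun i t => t ^+ e i))
  => [i | i | f coef_nz].
- exact: leq_trans (size_p i) (geq_minl _ _).
- exact: p_pow.
have f_lt i : (f i < minn #|K i| (e i).+1)%N.
  apply: leq_trans (size_p i); rewrite ltnNge; apply: contra (coef_nz i).
  by move=> le_p; rewrite nth_default.
rewrite !inE mdegE; apply/andP; split; last first.
  by apply: leq_sum => i _; move: (f_lt i); rewrite leq_min ltnS => /andP[].
apply/forallP => i; rewrite /qac_bound; case: eqP => [-> | _].
  by move: (f_lt s); rewrite leq_min ltnS => /andP[_ /leq_ltn_trans->].
by move: (f_lt i); rewrite leq_min => /andP[].
Qed.

Lemma qac_code_in_span d v :
  v \in code d -> v \in mono_span alpha (qac_exps K delta s d).
Proof.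
case/qac_codeP => f [/PdsP supp_f ->].
rewrite [f]mpolyE linear_sum big_seq; apply: memv_suml => e /supp_f[deg_e es_lt].
rewrite linearZ; apply/memvZ/(subvP (mono_span_sub alpha (box_le_sub F _ deg_e))).
by apply: monomial_word_in_span; rewrite /qac_bound eqxx.
Qed.

Lemma mono_word_in_code d f :
  f \in qac_exps K delta s d -> mono_word alpha f \in code d.
Proof.
move=> f_B; apply/qac_codeP.
move: f_B; rewrite !inE => /andP[/forallP f_lt deg_f].
exists 'X_[monomial_of f]; rewrite Psi_monomial; split=> //; apply/PdsP => e.
rewrite msuppX inE => /eqP ->; rewrite mdegE.
under eq_bigr do rewrite mnmE.
by split=> //; rewrite mnmE; move: (f_lt s); rewrite /qac_bound eqxx.
Qed.

Lemma span_qac_code d :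
  <<enum (code d)>>%VS = mono_span alpha (qac_exps K delta s d).
Proof.
apply/subv_anti/andP; split; apply/span_subvP => v.
  by rewrite mem_enum; apply: qac_code_in_span.
case/mapP => f f_B ->; apply: memv_span.
by rewrite mem_enum mono_word_in_code // -mem_enum.
Qed.

Lemma qac_code_eq d1 d2 :
  qac_exps K delta s d1 = qac_exps K delta s d2 -> code d1 = code d2.
Proof.
move=> eq_exps; apply/setP => v.
by rewrite -!mem_span_qac_code !span_qac_code eq_exps.
Qed.

End QuasiAffineCodes.

Section MonomialBasis.
Variables (F : finFieldType) (n m : nat) (K : 'I_n -> {set F}).
Variable alpha : 'I_m -> 'I_n -> F.
Hypotheses (alpha_on_grid : forall j i, alpha j i \in K i)
  (alpha_inj : injective alpha) (card_grid : (\prod_i #|K i|)%N = m).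

Notation full_box := (box F (fun i => #|K i|)).

(* The reduced monomial words span F^m: the indicator word of a grid point
   alpha j is the product over i of the indicators of alpha j i in K i,
   each of which is a polynomial of degree < #|K i| in t. *)
Lemma full_box_span : (fullv <= mono_span alpha full_box)%VS.
Proof.
apply/subvP => w _; rewrite [w]row_sum_delta; apply: memv_suml => j _.
apply: memvZ.
have /fin_all_exists [p /all_and2[size_p p_ind]] : forall i, exists p : {poly F},
    (size p <= #|K i|)%N /\ {in K i, forall t, (t == alpha j i)%:R = p.[t]}.
  move=> i; have [p] := lagrange_interp (K i) (fun t => (t == alpha j i)%:R).
  by exists p.
have -> : delta_mx 0 j = \row_j' \prod_i (alpha j' i == alpha j i)%:R :> 'rV[F]_m.
  apply/rowP => j'; rewrite !mxE /=; have [-> | ne_j] := eqVneq j' j.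
    by rewrite big1 // => i _; rewrite eqxx.
  have [i ne_i | eq_alpha] := pickP (fun i => alpha j' i != alpha j i).
    by rewrite (bigD1 i) //= (negbTE ne_i) mul0r.
  case/eqP: ne_j; apply/alpha_inj/functional_extensionality => i.
  by apply/eqP/negbFE/eq_alpha.
apply: (prod_word_in_span alpha_on_grid (p := p)
  (g := fun i t => (t == alpha j i)%:R)) => // f coef_nz.
rewrite inE; apply/forallP => i; apply: leq_trans (size_p i).
by rewrite ltnNge; apply: contra (coef_nz i) => le_p; rewrite nth_default.
Qed.

(* Since the box has exactly m elements, its monomial words form a basis of
   F^m; hence the words of any sub-box are free and span a space of dimension
   equal to its number of exponents. *)
Lemma dim_mono_span (B : {set expvec F n}) :
  B \subset full_box -> \dim (mono_span alpha B) = #|B|.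
Proof.
move=> sub_B.
have span_full : mono_span alpha full_box = fullv.
  by apply/eqP; rewrite eqEsubv subvf full_box_span.
have free_box : free (map (mono_word alpha) (enum full_box)).
  apply/eqP; rewrite size_map -cardE card_box => [|i]; last exact: max_card.
  rewrite card_grid -[<<_>>%VS]/(mono_span alpha full_box) span_full.
  by rewrite dimvf dim_matrix; exact: mul1n.
have perm_B : perm_eq (enum full_box) (enum B ++ enum (full_box :\: B)).
  apply: uniq_perm; rewrite ?enum_uniq // ?cat_uniq ?enum_uniq //=.
    by rewrite andbT; apply/hasPn => f; rewrite !mem_enum inE => /andP[/negbTE ->].
  move=> f; rewrite mem_cat !mem_enum in_setD.
  by case f_B: (f \in B) => //=; rewrite (subsetP sub_B _ f_B).
move: free_box; rewrite (perm_free (perm_map _ perm_B)) map_cat => /catl_free/eqP.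
by rewrite /mono_span size_map -cardE.
Qed.

Variables (delta : nat) (s : 'I_n).
Hypotheses (delta_gt0 : (0 < delta)%N) (delta_le : (delta <= #|K s|)%N).

Lemma dim_qac_code d :
  code_dim (qac_code K alpha delta s d) = #|qac_exps K delta s d|.
Proof.
rewrite /code_dim span_qac_code // dim_mono_span //.
apply/subsetP => f; rewrite !inE => /andP[/forallP f_lt _].
apply/forallP => i; apply: leq_trans (f_lt i) _; rewrite /qac_bound.
by case: eqP => [-> | _] //; lia.
Qed.

End MonomialBasis.

Theorem mainTheorem3 (F : finFieldType) (n : nat) (K : 'I_n -> {set F})
  (alpha : 'I_(\prod_(i < n) #|K i|) -> ('I_n -> F))
  (delta : nat) (s : 'I_n) :
  (forall i, K i != set0) ->
  injective alpha ->
  (forall x : 'I_n -> F, in_grid K x <-> exists j, alpha j = x) ->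
  (2 <= delta)%N ->
  (delta <= #|K s|)%N ->
  let dt := (\sum_(i < n | i != s) (#|K i| - 1) + (#|K s| - delta))%N in
  (forall d : nat, (dt <= d)%N ->
     qac_code K alpha delta s d = qac_code K alpha delta s dt)
  /\ code_dim (qac_code K alpha delta s dt)
       = ((#|K s| - delta + 1) * \prod_(i < n | i != s) #|K i|)%N
  /\ ((1 <= dt)%N ->
       code_dim (qac_code K alpha delta s dt.-1)
         = (code_dim (qac_code K alpha delta s dt)).-1).
Proof.
move=> K_neq0 alpha_inj alpha_grid delta_ge2 delta_le dt.
have on_grid j i : alpha j i \in K i by apply: (proj2 (alpha_grid _)); exists j.
pose b := qac_bound K delta s.
have b_gt0 i : (0 < b i)%N.
  by rewrite /b /qac_bound; case: eqP => _; rewrite ?addn1 // card_gt0.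
have b_le i : (b i <= #|F|)%N.
  apply: (leq_trans _ (max_card (K i))); rewrite /b /qac_bound.
  by case: eqP => [-> | _] //; lia.
(* dt is the degree of the corner of the box of reduced exponents *)
have dtE : dt = (\sum_i (b i).-1)%N.
  rewrite [RHS](bigD1 s) //= addnC /b /qac_bound eqxx addn1 /=.
  by congr (_ + _)%N; apply: eq_bigr => i /negbTE ->; rewrite subn1.
have dimE := dim_qac_code on_grid alpha_inj (erefl _) (ltnW delta_ge2) delta_le.
rewrite /qac_exps in dimE.
split; [|split].
- move=> d le_dt; apply: (qac_code_eq on_grid); rewrite /qac_exps -/b.
  by rewrite !box_le_full // -dtE.
- rewrite dimE box_le_full -?dtE // card_box // (bigD1 s) //= /b /qac_bound eqxx.
  by congr (_ * _)%N; apply: eq_bigr => i /negbTE ->.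
- by move=> dt_gt0; rewrite !dimE dtE card_box_le_pred // -dtE.
Qed.
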